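(* Let $11/5\le\gamma\le9$ and consider the SIEMS7 method ($\mathrm{k}=7$) with coefficients defined as in the context. Then $\sigma_{\mathrm{F}}=1$, $\sigma_{\mathrm{E}}=\dfrac{|c(\pi)|}{|a(\pi)|}$, $$\lambda_{\mathrm{I}}=\frac{105(1-2\gamma)^6}{16(420\gamma^6-1050\gamma^4+1400\gamma^3-840\gamma^2+252\gamma-31)},$$ so that $\mathfrak{I}_{\mathrm{IE}}=\dfrac{(1-2\gamma)^6}{64\gamma^6+192\gamma^5-240\gamma^4+160\gamma^3-60\gamma^2+12\gamma-1}$.
   Context: The $\gamma$-parameterized SIEMS-$\mathrm{k}$ method has coefficients $a_j$ ($0\le j\le\mathrm{k}-1$), $b_j$ ($0\le j\le\mathrm{k}$), $c_j$ ($0\le j\le\mathrm{k}-1$) determined by the polynomial identities (in $\zeta$) $\sum_{j=0}^{\mathrm{k}-1}a_j\zeta^{\mathrm{k}-j-1}=\sum_{j=1}^{\mathrm{k}}\frac{f^{(j)}(1)}{j!}(\zeta-1)^{j-1}$ with $f(z)=(\gamma z-\gamma+1)^{\mathrm{k}-1}z\ln z$; $\sum_{j=0}^{\mathrm{k}}b_j\zeta^{\mathrm{k}-j}=\zeta(\gamma\zeta-\gamma+1)^{\mathrm{k}-1}$; $\sum_{j=0}^{\mathrm{k}-1}c_j\zeta^{\mathrm{k}-j-1}=\zeta(\gamma\zeta-\gamma+1)^{\mathrm{k}-1}-\gamma^{\mathrm{k}-1}(\zeta-1)^{\mathrm{k}}$. Define $a(\theta)=\sum_j a_je^{\imath j\theta}$,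 $b(\theta)=\sum_j b_je^{\imath j\theta}$, $c(\theta)=\sum_jc_je^{\imath j\theta}$, $\sigma_{\mathrm{F}}=\max_{\theta\in[0,2\pi)}|1/a(\theta)|$, $\sigma_{\mathrm{E}}=\max_{\theta\in[0,2\pi)}|c(\theta)/a(\theta)|$, $\lambda_{\mathrm{I}}=\min_{\theta\in[0,2\pi)}\Re[b(\theta)/a(\theta)]$, $\mathfrak{I}_{\mathrm{IE}}=\lambda_{\mathrm{I}}/\sigma_{\mathrm{E}}$. *)

From Stdlib Require Import Reals Arith Factorial.
From Coquelicot Require Import Coquelicot.
Open Scope R_scope.

Definition fSIEMS (k : nat) (g : R) (z : R) : R :=
  (g * z - g + 1) ^ (k - 1) * z * ln z.

Definition cexpi (t : R) : C := (cos t, sin t).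

Definition trig_sum (p : nat -> R) (n : nat) (t : R) : C :=
  sum_n (fun j => Cmult (RtoC (p j)) (cexpi (INR j * t))) n.

Definition SIEMS_a_coeffs (k : nat) (g : R) (a : nat -> R) : Prop :=
  forall zeta : R,
    sum_f_R0 (fun j => a j * zeta ^ (k - j - 1)) (k - 1) =
    sum_f_R0 (fun i => Derive_n (fSIEMS k g) (S i) 1 / INR (fact (S i)) * (zeta - 1) ^ i)
             (k - 1).

Definition SIEMS_b_coeffs (k : nat) (g : R) (b : nat -> R) : Prop :=
  forall zeta : R,
    sum_f_R0 (fun j => b j * zeta ^ (k - j)) k = zeta * (g * zeta - g + 1) ^ (k - 1).

Definition SIEMS_c_coeffs (k : nat) (g : R) (c : nat -> R) : Prop :=
  forall zeta : R,
    sum_f_R0 (fun j => c j * zeta ^ (k - j - 1)) (k - 1) =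
    zeta * (g * zeta - g + 1) ^ (k - 1) - g ^ (k - 1) * (zeta - 1) ^ k.

Definition is_max_of (S : R -> Prop) (v : R) : Prop := S v /\ forall x, S x -> x <= v.
Definition is_min_of (S : R -> Prop) (v : R) : Prop := S v /\ forall x, S x -> v <= x.

Definition range_0_2pi (F : R -> R) : R -> Prop :=
  fun v => exists t, 0 <= t < 2 * PI /\ v = F t.

(* Writing x = cos t, a trigonometric polynomial sum_j p_j e^(i j t) has real part
   sum_j p_j T_j(x) and imaginary part sin t * sum_j p_j U_(j-1)(x), so |a(t)|^2, |c(t)|^2
   and Re (b(t) conj a(t)) are polynomials in (x, gamma).  Each extremal claim becomes a
   polynomial inequality on [-1,1] x [11/5, 9] whose defect vanishes at the extremal point
   x = 1 (for sigma_F) or x = -1 (for sigma_E and lambda_I); after splitting off that linear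
   factor, the quotient has positive coefficients in a tensor Bernstein basis of the box
   (of a subdivision of it, for sigma_F).  The coefficients a_j are obtained from the
   Taylor expansion at 1 of (gamma z - gamma + 1)^6 z ln z, via the Leibniz rule. *)

From Stdlib Require Import Reals Lra Lia Factorial ZArith List.
From Coquelicot Require Import Coquelicot.
Import ListNotations.
Open Scope R_scope.

Lemma is_derive_sum_f_R0 (f : nat -> R -> R) (df : nat -> R) (N : nat) (x : R) :
  (forall k, (k <= N)%nat -> is_derive (f k) x (df k)) ->
  is_derive (fun y => sum_f_R0 (fun k => f k y) N) x (sum_f_R0 df N).
Proof.
  intros Hf. rewrite <- sum_n_Reals.
  apply (is_derive_ext (fun y => sum_n (fun k => f k y) N)); [intro; apply sum_n_Reals|].
  apply (is_derive_sum_n f). exact Hf.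
Qed.

Lemma sum_binomial_pascal (X : nat -> R) (n : nat) :
  sum_f_R0 (fun k => Binomial.C (S n) k * X k) (S n) =
  sum_f_R0 (fun k => Binomial.C n k * X k) n +
  sum_f_R0 (fun k => Binomial.C n k * X (S k)) n.
Proof.
  destruct n as [|m].
  - simpl. rewrite !C_n_0, (C_n_n 1). ring.
  - rewrite (decomp_sum _ (S (S m))), (decomp_sum (fun k => Binomial.C (S m) k * X k)) by lia.
    simpl pred.
    rewrite (tech5 (fun i => Binomial.C (S (S m)) (S i) * X (S i))),
      (tech5 (fun k => Binomial.C (S m) k * X (S k))), !C_n_0, !C_n_n.
    rewrite (sum_eq _ (fun i => Binomial.C (S m) i * X (S i) + Binomial.C (S m) (S i) * X (S i)))
      by (intros i Hi; rewrite <- pascal by lia; ring).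
    rewrite plus_sum. ring.
Qed.

Lemma Derive_n_mult (D : R -> Prop) (F G : nat -> R -> R) :
  open D ->
  (forall k x, D x -> is_derive (F k) x (F (S k) x)) ->
  (forall k x, D x -> is_derive (G k) x (G (S k) x)) ->
  forall n x, D x ->
  Derive_n (fun y => F O y * G O y) n x =
  sum_f_R0 (fun k => Binomial.C n k * F k x * G (n - k)%nat x) n.
Proof.
  intros HD HF HG n. induction n as [|n IH]; intros x Hx.
  - simpl. rewrite C_n_0. ring.
  - simpl Derive_n.
    rewrite (Derive_ext_loc _
               (fun y => sum_f_R0 (fun k => Binomial.C n k * F k y * G (n - k)%nat y) n))
      by exact (locally_open D _ HD IH x Hx).
    apply is_derive_unique.
    rewrite (sum_eq _ (fun k => Binomial.C (S n) k * (F k x * G (S n - k)%nat x)))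
      by (intros; ring).
    rewrite sum_binomial_pascal, <- plus_sum.
    apply is_derive_sum_f_R0. intros k Hk.
    apply (is_derive_ext (fun y => Binomial.C n k * (F k y * G (n - k)%nat y)));
      [intro; now rewrite Rmult_assoc|].
    replace (S n - k)%nat with (S (n - k)) by lia. simpl minus.
    rewrite <- Rmult_plus_distr_l, Rplus_comm.
    apply is_derive_scal.
    apply (is_derive_mult (F k) (G (n - k)%nat));
      [apply HF, Hx | apply HG, Hx | intros; apply Rmult_comm].
Qed.

Definition monomial_deriv (a : R) (m k : nat) (z : R) : R :=
  if (k <=? m)%nat then INR (fact m) / INR (fact (m - k)) * (z - a) ^ (m - k) else 0.

Lemma is_derive_monomial_deriv (a : R) (m k : nat) (z : R) :
  is_derive (monomial_deriv a m k) z (monomial_deriv a m (S k) z).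
Proof.
  unfold monomial_deriv.
  destruct (Nat.leb_spec k m) as [Hkm | Hkm];
    [destruct (Nat.leb_spec (S k) m) as [Hkm' | Hkm']|].
  - replace (m - k)%nat with (S (m - S k)) by lia. set (p := (m - S k)%nat).
    rewrite fact_simpl, mult_INR, S_INR.
    assert (0 < INR (fact p)) by apply INR_fact_lt_0.
    assert (0 <= INR p) by apply pos_INR.
    auto_derive; [exact I|].
    change (match p with O => 1 | S _ => INR p + 1 end) with (INR (S p)). rewrite S_INR.
    replace (z + - a) with (z - a) by ring. field. lra.
  - replace (m - k)%nat with O by lia. auto_derive; [exact I|]. ring.
  - rewrite (proj2 (Nat.leb_gt (S k) m)) by lia. auto_derive; [exact I|]. ring.
Qed.

Definition ln_deriv (k : nat) (z : R) : R :=
  match k with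
  | O => ln z
  | S j => (-1) ^ j * INR (fact j) / z ^ S j
  end.

Lemma is_derive_ln_deriv (k : nat) (z : R) : 0 < z ->
  is_derive (ln_deriv k) z (ln_deriv (S k) z).
Proof.
  intros Hz. destruct k as [|j]; unfold ln_deriv.
  - auto_derive; [exact Hz|]. simpl. field. lra.
  - set (c := (-1) ^ j * INR (fact j)).
    assert (z ^ j <> 0) by (apply pow_nonzero; lra).
    auto_derive; [simpl; apply Rmult_integral_contrapositive_currified; lra|].
    change (match j with O => 1 | S _ => INR j + 1 end) with (INR (S j)).
    unfold c. rewrite fact_simpl, mult_INR. simpl. field. lra.
Qed.

Definition poly_deriv (e : nat -> R) (N k : nat) (z : R) : R :=
  sum_f_R0 (fun m => e m * monomial_deriv 1 m k z) N.

Lemma poly_deriv_at_1 (e : nat -> R) (N k : nat) : (k <= N)%nat ->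
  poly_deriv e N k 1 = e k * INR (fact k).
Proof.
  intros Hk. unfold poly_deriv. induction N as [|N IH].
  - replace k with O by lia. unfold monomial_deriv. simpl. field.
  - rewrite tech5. destruct (Nat.eq_dec k (S N)) as [-> | Hne].
    + rewrite (sum_eq _ (fun _ => 0)).
      * rewrite sum_cte, Rmult_0_l, Rplus_0_l. unfold monomial_deriv.
        rewrite Nat.leb_refl, Nat.sub_diag. simpl. field.
      * intros m Hm. unfold monomial_deriv. rewrite (proj2 (Nat.leb_gt (S N) m)) by lia. ring.
    + rewrite IH by lia. unfold monomial_deriv. rewrite (proj2 (Nat.leb_le k (S N))) by lia.
      replace (S N - k)%nat with (S (N - k)) by lia. simpl. ring.
Qed.

(* Taylor coefficients at 1 of P(z) ln z, for P(z) = sum_m e_m (z - 1)^m: the Cauchy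
   product of (e_m) with the series ln z = sum_(j >= 1) (-1)^(j-1) (z - 1)^j / j. *)
Lemma Derive_n_poly_mul_ln (e : nat -> R) (N n : nat) : (n <= N)%nat ->
  Derive_n (fun z => sum_f_R0 (fun m => e m * (z - 1) ^ m) N * ln z) (S n) 1 / INR (fact (S n))
  = sum_f_R0 (fun k => e k * (-1) ^ (n - k) / INR (S n - k)) n.
Proof.
  intros Hn.
  rewrite (Derive_n_ext _ (fun z => poly_deriv e N 0 z * ln_deriv 0 z)).
  2:{ intro z. unfold poly_deriv, monomial_deriv. simpl ln_deriv. f_equal. apply sum_eq.
      intros m _. rewrite Nat.sub_0_r. simpl. field. apply INR_fact_neq_0. }
  rewrite (Derive_n_mult (fun z => 0 < z)); [| apply open_gt | | | lra].
  2:{ intros k z _. apply is_derive_sum_f_R0. intros m _.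
      apply is_derive_scal, is_derive_monomial_deriv. }
  2:{ intros k z Hz. now apply is_derive_ln_deriv. }
  rewrite tech5, Nat.sub_diag. simpl ln_deriv at 2. rewrite ln_1, Rmult_0_r, Rplus_0_r.
  unfold Rdiv. rewrite Rmult_comm, scal_sum. apply sum_eq. intros k Hk.
  rewrite poly_deriv_at_1 by lia.
  replace (S n - k)%nat with (S (n - k)) by lia. simpl ln_deriv.
  unfold Binomial.C. rewrite pow1. replace (S n - k)%nat with (S (n - k)) by lia.
  rewrite (fact_simpl (n - k)), mult_INR.
  pose proof (INR_fact_neq_0 k). pose proof (INR_fact_neq_0 (n - k)).
  pose proof (INR_fact_neq_0 (S n)). assert (INR (S (n - k)) <> 0) by (apply not_0_INR; lia).
  field. repeat split; assumption.
Qed.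

Lemma poly_coeffs_unique7 (p q : nat -> R) :
  (forall z, sum_f_R0 (fun j => p j * z ^ (7 - j)) 7 = sum_f_R0 (fun j => q j * z ^ (7 - j)) 7) ->
  forall j, (j <= 7)%nat -> p j = q j.
Proof.
  intros H j Hj.
  pose proof (H 0) as H0. pose proof (H 1) as H1. pose proof (H (-1)) as H2.
  pose proof (H 2) as H3. pose proof (H (-2)) as H4. pose proof (H 3) as H5.
  pose proof (H (-3)) as H6. pose proof (H 4) as H7. simpl in *.
  do 8 (destruct j as [|j]; [lra|]). lia.
Qed.

Lemma poly_coeffs_unique6 (p q : nat -> R) :
  (forall z, sum_f_R0 (fun j => p j * z ^ (6 - j)) 6 = sum_f_R0 (fun j => q j * z ^ (6 - j)) 6) ->
  forall j, (j <= 6)%nat -> p j = q j.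
Proof.
  intros H j Hj.
  refine (poly_coeffs_unique7 (fun j => match j with O => 0 | S i => p i end)
                              (fun j => match j with O => 0 | S i => q i end) _ (S j) _); [|lia].
  intro z. specialize (H z). simpl in *. lra.
Qed.

Definition siems7_a_num (g : R) (j : nat) : R :=
  match j with
  | 0%nat => 420 * g^6 + 1260 * g^5 - 1050 * g^4 + 700 * g^3 - 315 * g^2 + 84 * g - 10
  | 1%nat => -2520 * g^6 - 5040 * g^5 + 9450 * g^4 - 5600 * g^3 + 2415 * g^2 - 630 * g + 74
  | 2%nat => 6300 * g^6 + 6300 * g^5 - 25200 * g^4 + 21700 * g^3 - 8400 * g^2 + 2100 * g - 241
  | 3%nat => -8400 * g^6 + 27300 * g^4 - 36400 * g^3 + 18900 * g^2 - 4200 * g + 459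
  | 4%nat => 6300 * g^6 - 6300 * g^5 - 9450 * g^4 + 24500 * g^3 - 19425 * g^2 + 6300 * g - 591
  | 5%nat => -2520 * g^6 + 5040 * g^5 - 3150 * g^4 - 2800 * g^3 + 5565 * g^2 - 3234 * g + 669
  | 6%nat => 420 * g^6 - 1260 * g^5 + 2100 * g^4 - 2100 * g^3 + 1260 * g^2 - 420 * g + 60
  | _ => 0
  end.

Definition siems7_a (g : R) (j : nat) : R := siems7_a_num g j / 420.

Definition siems7_b (g : R) (j : nat) : R :=
  match j with
  | 0%nat => g^6
  | 1%nat => 6 * g^5 * (1 - g)
  | 2%nat => 15 * g^4 * (1 - g)^2
  | 3%nat => 20 * g^3 * (1 - g)^3
  | 4%nat => 15 * g^2 * (1 - g)^4
  | 5%nat => 6 * g * (1 - g)^5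
  | 6%nat => (1 - g)^6
  | _ => 0
  end.

Definition siems7_c (g : R) (j : nat) : R :=
  match j with
  | 0%nat => 6 * g^5 * (1 - g) + 7 * g^6
  | 1%nat => 15 * g^4 * (1 - g)^2 - 21 * g^6
  | 2%nat => 20 * g^3 * (1 - g)^3 + 35 * g^6
  | 3%nat => 15 * g^2 * (1 - g)^4 - 35 * g^6
  | 4%nat => 6 * g * (1 - g)^5 + 21 * g^6
  | 5%nat => (1 - g)^6 - 7 * g^6
  | 6%nat => g^6
  | _ => 0
  end.

(* Taylor coefficients at 1 of z (g z - g + 1)^6 = (1 + w) (1 + g w)^6, w = z - 1. *)
Definition siems7_h_taylor (g : R) (m : nat) : R :=
  match m with
  | 0%nat => 1
  | 1%nat => 6 * g + 1
  | 2%nat => 15 * g^2 + 6 * g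
  | 3%nat => 20 * g^3 + 15 * g^2
  | 4%nat => 15 * g^4 + 20 * g^3
  | 5%nat => 6 * g^5 + 15 * g^4
  | 6%nat => g^6 + 6 * g^5
  | 7%nat => g^6
  | _ => 0
  end.

Lemma fSIEMS7_taylor (g : R) (n : nat) : (n <= 7)%nat ->
  Derive_n (fSIEMS 7 g) (S n) 1 / INR (fact (S n))
  = sum_f_R0 (fun k => siems7_h_taylor g k * (-1) ^ (n - k) / INR (S n - k)) n.
Proof.
  intros Hn. rewrite <- (Derive_n_poly_mul_ln (siems7_h_taylor g) 7 n Hn). f_equal.
  apply Derive_n_ext. intro z. unfold fSIEMS. simpl. ring.
Qed.

Lemma siems7_a_coeffs (g : R) (a : nat -> R) : SIEMS_a_coeffs 7 g a ->
  forall j, (j <= 6)%nat -> a j = siems7_a g j.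
Proof.
  intros Ha. apply poly_coeffs_unique6. intro z. specialize (Ha z).
  rewrite (sum_eq (fun i => Derive_n (fSIEMS 7 g) (S i) 1 / INR (fact (S i)) * (z - 1) ^ i)
                  (fun i => sum_f_R0 (fun k => siems7_h_taylor g k * (-1) ^ (i - k)
                                               / INR (S i - k)) i * (z - 1) ^ i)) in Ha
    by (intros i Hi; rewrite fSIEMS7_taylor by (simpl in Hi; lia); reflexivity).
  simpl in Ha |- *. rewrite Ha. unfold siems7_a. simpl. field.
Qed.

Lemma siems7_b_coeffs (g : R) (b : nat -> R) : SIEMS_b_coeffs 7 g b ->
  forall j, (j <= 7)%nat -> b j = siems7_b g j.
Proof.
  intros Hb. apply poly_coeffs_unique7. intro z. specialize (Hb z).
  simpl in Hb |- *. rewrite Hb. ring.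
Qed.

Lemma siems7_c_coeffs (g : R) (c : nat -> R) : SIEMS_c_coeffs 7 g c ->
  forall j, (j <= 6)%nat -> c j = siems7_c g j.
Proof.
  intros Hc. apply poly_coeffs_unique6. intro z. specialize (Hc z).
  simpl in Hc |- *. rewrite Hc. ring.
Qed.

(* [cheb_V n] is the Chebyshev polynomial U_(n-1) of the second kind, with [cheb_V 0 = 0]. *)
Fixpoint cheb_T (n : nat) (x : R) : R :=
  match n with
  | O => 1
  | S m => cheb_T m x * x - (1 - x ^ 2) * cheb_V m x
  end
with cheb_V (n : nat) (x : R) : R :=
  match n with
  | O => 0
  | S m => cheb_V m x * x + cheb_T m x
  end.

Lemma sin_sq (t : R) : sin t ^ 2 = 1 - cos t ^ 2.
Proof. rewrite <- (sin2_cos2 t). unfold Rsqr. ring. Qed.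

Lemma cos_sin_nat_mul (n : nat) (t : R) :
  cos (INR n * t) = cheb_T n (cos t) /\ sin (INR n * t) = sin t * cheb_V n (cos t).
Proof.
  induction n as [|n [IHc IHs]].
  - simpl. rewrite Rmult_0_l, cos_0, sin_0. split; ring.
  - rewrite S_INR, Rmult_plus_distr_r, Rmult_1_l, cos_plus, sin_plus, IHc, IHs.
    cbn [cheb_T cheb_V]. rewrite <- sin_sq. split; ring.
Qed.

Definition cos_part (p : nat -> R) (n : nat) (x : R) : R :=
  sum_f_R0 (fun j => p j * cheb_T j x) n.

Definition sin_part (p : nat -> R) (n : nat) (x : R) : R :=
  sum_f_R0 (fun j => p j * cheb_V j x) n.

(* With x = cos t: [sqmod p n x = |p(t)|^2] and [re_mul_conj p m q n x = Re (p(t) * conj q(t))]. *)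
Definition sqmod (p : nat -> R) (n : nat) (x : R) : R :=
  cos_part p n x ^ 2 + (1 - x ^ 2) * sin_part p n x ^ 2.

Definition re_mul_conj (p : nat -> R) (m : nat) (q : nat -> R) (n : nat) (x : R) : R :=
  cos_part p m x * cos_part q n x + (1 - x ^ 2) * sin_part p m x * sin_part q n x.

Lemma trig_sum_cheb (p : nat -> R) (n : nat) (t : R) :
  trig_sum p n t = (cos_part p n (cos t), sin t * sin_part p n (cos t)).
Proof.
  unfold trig_sum, cos_part, sin_part. induction n as [|n IH].
  - rewrite sum_O. simpl sum_f_R0. unfold cexpi.
    destruct (cos_sin_nat_mul 0 t) as [-> ->].
    unfold Cmult, RtoC; simpl. f_equal; ring.
  - rewrite sum_Sn, IH. simpl sum_f_R0. unfold cexpi.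
    destruct (cos_sin_nat_mul (S n) t) as [-> ->].
    unfold plus; simpl. unfold Cplus, Cmult, RtoC; simpl. f_equal; ring.
Qed.

Lemma trig_sum_ext (p q : nat -> R) (n : nat) (t : R) :
  (forall j, (j <= n)%nat -> p j = q j) -> trig_sum p n t = trig_sum q n t.
Proof.
  intros Hpq. rewrite !trig_sum_cheb. unfold cos_part, sin_part.
  f_equal; [|f_equal]; apply sum_eq; intros j Hj; now rewrite Hpq.
Qed.

Lemma Cmod_trig_sum (p : nat -> R) (n : nat) (t : R) :
  Cmod (trig_sum p n t) = sqrt (sqmod p n (cos t)).
Proof.
  rewrite trig_sum_cheb. unfold Cmod, sqmod. rewrite <- sin_sq. simpl fst; simpl snd.
  f_equal. ring.
Qed.

Lemma Re_Cdiv_pair (u1 u2 v1 v2 : R) :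
  Re ((u1, u2) / (v1, v2)) = (u1 * v1 + u2 * v2) / (v1 ^ 2 + v2 ^ 2).
Proof. unfold Cdiv, Cmult, Cinv, Re, Im; simpl. unfold Rdiv. ring. Qed.

Lemma Re_div_trig_sum (q p : nat -> R) (m n : nat) (t : R) :
  Re (trig_sum q m t / trig_sum p n t) = re_mul_conj q m p n (cos t) / sqmod p n (cos t).
Proof.
  rewrite !trig_sum_cheb, Re_Cdiv_pair. unfold re_mul_conj, sqmod. rewrite <- sin_sq.
  f_equal; ring.
Qed.

Lemma sqmod_at_pm1 (p : nat -> R) (n : nat) (x : R) : x ^ 2 = 1 ->
  sqmod p n x = cos_part p n x ^ 2.
Proof. intros Hx. unfold sqmod. rewrite Hx. ring. Qed.

Lemma re_mul_conj_at_pm1 (p q : nat -> R) (m n : nat) (x : R) : x ^ 2 = 1 ->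
  re_mul_conj p m q n x = cos_part p m x * cos_part q n x.
Proof. intros Hx. unfold re_mul_conj. rewrite Hx. ring. Qed.

Lemma cos_part_div (p : nat -> R) (n : nat) (k x : R) :
  cos_part (fun j => p j / k) n x = cos_part p n x / k.
Proof.
  unfold cos_part, Rdiv. rewrite Rmult_comm, scal_sum. apply sum_eq. intros; ring.
Qed.

Lemma sin_part_div (p : nat -> R) (n : nat) (k x : R) :
  sin_part (fun j => p j / k) n x = sin_part p n x / k.
Proof.
  unfold sin_part, Rdiv. rewrite Rmult_comm, scal_sum. apply sum_eq. intros; ring.
Qed.

Lemma sqmod_div (p : nat -> R) (n : nat) (k x : R) : k <> 0 ->
  sqmod (fun j => p j / k) n x = sqmod p n x / k ^ 2.
Proof. intros Hk. unfold sqmod. rewrite cos_part_div, sin_part_div. field. exact Hk. Qed.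

Lemma re_mul_conj_div_r (q p : nat -> R) (m n : nat) (k x : R) : k <> 0 ->
  re_mul_conj q m (fun j => p j / k) n x = re_mul_conj q m p n x / k.
Proof. intros Hk. unfold re_mul_conj. rewrite cos_part_div, sin_part_div. field. exact Hk. Qed.

Fixpoint bernstein (cs : list R) (d : nat) (p q : R) : R :=
  match cs with
  | nil => 0
  | c :: cs' => c * q ^ d + p * bernstein cs' (pred d) p q
  end.

Definition bernstein2 (C : list (list Z)) (dx dy : nat) (p q r w : R) : R :=
  bernstein (map (fun row => bernstein (map IZR row) dy r w) C) dx p q.

Lemma bernstein_nonneg (cs : list R) (d : nat) (p q : R) :
  List.Forall (Rle 0) cs -> 0 <= p -> 0 <= q -> 0 <= bernstein cs d p q.
Proof.
  intros Hcs Hp Hq. revert d. induction Hcs as [|c cs Hc _ IH]; intro d; simpl.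
  - lra.
  - apply Rplus_le_le_0_compat; apply Rmult_le_pos; auto using pow_le.
Qed.

Lemma bernstein2_nonneg (C : list (list Z)) (dx dy : nat) (p q r w : R) :
  forallb (forallb (Z.leb 0)) C = true -> 0 <= p -> 0 <= q -> 0 <= r -> 0 <= w ->
  0 <= bernstein2 C dx dy p q r w.
Proof.
  intros HC Hp Hq Hr Hw. apply bernstein_nonneg; [|assumption..].
  apply List.Forall_forall. intros v Hv. apply in_map_iff in Hv as [row [<- Hrow]].
  apply bernstein_nonneg; [|assumption..].
  apply List.Forall_forall. intros c Hc. apply in_map_iff in Hc as [z [<- Hz]].
  apply IZR_le. rewrite forallb_forall in HC. specialize (HC row Hrow).
  rewrite forallb_forall in HC. now apply Z.leb_le, HC.
Qed.

Lemma nonneg_of_scaled_product (s l B Q : R) :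
  0 < s -> 0 <= l -> 0 <= B -> s * Q = l * B -> 0 <= Q.
Proof.
  intros Hs Hl HB E. apply (Rmult_le_reg_l s); [exact Hs|].
  rewrite Rmult_0_r, E. now apply Rmult_le_pos.
Qed.

(* Entry (i, j) of a certificate is the coefficient of p^i q^(dx-i) r^j w^(dy-j) in
   s * Q / l, where Q is the defect of one of the inequalities below, l = 1 - x or 1 + x
   is its linear factor vanishing at the extremal point, s is a normalising integer, and
   p, q, r, w are the nonnegative affine forms of the (sub)box used there. *)
Definition cert_sqmod_a_1 : list (list Z) :=
  [
    [2956281176769696631; 154771513357456808340; 3708568618153133823150;
     53765537671766396242500; 525091837115101660025625; 3638154220706257894185000;
     18329884309124174569562500; 67633033568865336611625000; 181294197142369107622265625;
     344116199581078020276562500; 438754498641709713442968750; 337172080936070842007812500;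
     118016682752787614833984375];
    [7155225007217226315; 377006054606192084700; 9085189078205520773550;
     132372193261339049797500; 1298353037646436185178125; 9028355503742060294475000;
     45621454267901018846062500; 168721369280296040259375000; 453030820925117929320703125;
     860851049834148417117187500; 1098231813340602591930468750; 844078346378041176492187500;
     295397030260221103857421875];
    [6930938419655893865; 367545803822760642300; 8907561171917674604850;
     130425475836668001607500; 1284664947834718958634375; 8964763229538070204875000;
     45430236934004551867437500; 168389725238128055926875000; 452876318199703244640234375;
     861468571222286435554687500; 1099618366115609392544531250; 845243279819456024273437500;
     295755325822035484853515625];
    [3359345976202797895; 179289230253177518700; 4369508920498113064950;
     64289037115345572627500; 635845481175944248790625; 4452354709560487988175000;
     22625664850817720500812500; 84044077038935402836875000; 226386311271725747459765625;
     431071803323880171898437500; 550523100790501742233593750; 423212548159953768585937500;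
     148058303286312128037109375];
    [814930339482646980; 43767186332420190000; 1072509466340258051400; 15854327690728971030000;
     157432225456488405037500; 1106037235285024578300000; 5635626209655009429750000;
     20977145826626312737500000; 56590047505104711098437500; 107859588133064013843750000;
     137814452340773037928125000; 105952986266086506468750000; 37060110698084074101562500];
    [79178416270819058; 4278246898825809720; 105391139878639018500; 1565000206686306175000;
     15599916552688111548750; 109945445591716007430000; 561644503634604887875000;
     2094716029327030821750000; 5659003063969263442968750; 10795855261425432634375000;
     13800336486262872501562500; 10610496951171900796875000; 3710602199985049707031250]
  ]%Z.

Definition cert_sqmod_a_2 : list (list Z) :=
  [
    [316713665083276232; 17112987595303238880; 421564559514556074000; 6260000826745224700000;
     62399666210752446195000; 439781782366864029720000; 2246578014538419551500000;
     8378864117308123287000000; 22636012255877053771875000; 43183421045701730537500000;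
     55201345945051490006250000; 42441987804687603187500000; 14842408799940198828125000];
    [745491809159277780; 40813034299933911600; 1016715263678654452200; 15241350819131243190000;
     153133045667666536387500; 1086288897181431066300000; 5578082689728127776750000;
     20887189226558299177500000; 56589996908868481092187500; 108156481576634951343750000;
     138381189906340099190625000; 106408936002984010968750000; 37197844603383343007812500];
    [706239366784749355; 39125215158458113500; 984597913492528113150; 14887123428365476017500;
     150651265440013427728125; 1074997989394633717275000; 5546155662072047252562500;
     20842769758852423944375000; 56616016967702924145703125; 108383719255400942867187500;
     138779956464883812236718750; 106721438572386762679687500; 37291172907957712451171875];
    [337554713613747965; 18877934594057695200; 479057848711971599550; 7296109353690191835000;
     74290838662097763309375; 532844380439158233300000; 2760473691663871579812500;
     10407210696384001826250000; 28334372620937606391796875; 54320410046022587625000000;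
     69599982944068907430468750; 53521286033934879421875000; 18693010027098543447265625];
    [81679443078312735; 4593579657123413100; 117238046562364709850; 1795258366221657682500;
     18369299231638645978125; 132309334627285824675000; 687844241306530584937500;
     2600335126147322113125000; 7093606604934134666015625; 13616043687895291710937500;
     17455190530867135966406250; 13421554066833476695312500; 4685299914825195029296875];
    [8035885146138301; 451942047587880240; 11558642450223642450; 177533621536868340000;
     1822524673735160431875; 13168450438808223660000; 68648557721199078437500;
     260101293732914421000000; 710712850412509707421875; 1365586051718620143750000;
     1751311780302814432031250; 1346388965433136312500000; 469754051442608330078125]
  ]%Z.

Definition cert_sqmod_a_3 : list (list Z) :=
  [
    [64287081169106408; 3615536380703041920; 92469139601789139600; 1420268972294946720000;
     14580197389881283455000; 105347603510465789280000; 549188461769592627500000;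
     2080810349863315368000000; 5685702803300077659375000; 10924688413748961150000000;
     14010494242422515456250000; 10771111723465090500000000; 3758032411540866640625000];
    [155435336455047120; 8742204226779162000; 224566360763959707600; 3470983827325469670000;
     35874283497555042000000; 260869687819350120900000; 1367536498045822366500000;
     5204737119385576807500000; 14268344605014043781250000; 27470988351536041781250000;
     35257944694700322056250000; 27097121658654271968750000; 9444043427255719687500000];
    [161262119652884470; 8859525982971919200; 224958220967445803700; 3462069794696900490000;
     35772937037196900881250; 260585808808936933200000; 1369425981786843239875000;
     5224611237156868717500000; 14350499797707728135156250; 27661260891909800062500000;
     35511513601833149432812500; 27275288241830854406250000; 9494551358061905605468750];
    [90752118967435910; 4747247552124500700; 116901672107905412400; 1767986793831187442500;
     18105785918872875843750; 131378983162576238175000; 689629117073896557250000;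
     2631379004535092053125000; 7231049565669882419531250; 13941845976484032179687500;
     17893782046670909100000000; 13731236790966214945312500; 4773315824872896113281250];
    [27593253875106615; 1347951846252941700; 31615430775952744800; 463387984533107310000;
     4658136374995894321875; 33456760320681289575000; 174713104100350255125000;
     665044906865678553750000; 1825573476073098186328125; 3517434970094406726562500;
     4510842147943443496875000; 3457359633654951375000000; 1200038960216525947265625];
    [3567482517820894; 161344563697920510; 3557567291172767400; 49908923624783648750;
     487745915919895871250; 3444657075811140877500; 17818687836117460250000;
     67483423557030298687500; 184743544323098932031250; 355373369077642477343750;
     455121173305222940625000; 348308788941455402343750; 120695242491029511718750]
  ]%Z.

Definition cert_sqmod_a_4 : list (list Z) :=
  [
    [3567482517820894; 161344563697920510; 3557567291172767400; 49908923624783648750;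
     487745915919895871250; 3444657075811140877500; 17818687836117460250000;
     67483423557030298687500; 184743544323098932031250; 355373369077642477343750;
     455121173305222940625000; 348308788941455402343750; 120695242491029511718750];
    [8081571303102325; 265493790726263400; 3960242135774929200; 35701251714729177500;
     219322784203064390625; 989810437430119200000; 3473774260824347375000;
     9789328704624433125000; 21861967157891133984375; 36298720682018046875000;
     40369585108785909375000; 25728255759602648437500; 6913464693769169921875];
    [12705388679418750; 417415330017787500; 6280917547194150000; 57239862557674912500;
     350531555701556118750; 1511183629571556675000; 4671797715792926250000;
     10356691890875570625000; 16203530009054210156250; 17300978834477460937500;
     11891795332278750000000; 4711279384820039062500; 813842781869003906250];
    [6411102574843750; 180680115538125000; 2286856350942187500; 17253229478340625000;
     86178749730560156250; 298408535060816250000; 729249137526800625000;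
     1258909839822206250000; 1517716405124472656250; 1245210940029765625000;
     660991967496492187500; 204411564034453125000; 27945261209277343750];
    [1826762875000000; 44176936125000000; 465140652375000000; 2844559435375000000;
     11275648965000000000; 30486337607250000000; 57671463396750000000; 77090039916750000000;
     72513730492875000000; 46984895610625000000; 19977646276875000000; 5021283421875000000;
     565836381250000000];
    [219443437500000; 4545056250000000; 39335821875000000; 191657681250000000;
     596116926562500000; 1263488152500000000; 1888916006250000000; 2020535212500000000;
     1542425751562500000; 822530231250000000; 291684841875000000; 61897106250000000;
     5954648437500000]
  ]%Z.

Definition cert_ratio_c_a : list (list Z) :=
  [
    [2551840447431580055901450123629; 789886318126511913041692393816785;
     58612368239629632443343206848766250; 2283332822190118220116267960964946250;
     57780830966093619770435416658396170125; 1047888831916121171936287702341440465625;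
     14393218650681204768733904698188444975000; 154956829077762692100644599877264863575000;
     1337172545163884734769248122442759743656250; 9386043434233363975265108645788562728281250;
     54093362386274630796397691948268753585937500;
     257272961115764045649802884260960356335937500;
     1011314944924425107567919353637982682363281250;
     3279257739454379145502409545091416109472656250;
     8722110401974652934252748312150372833984375000;
     18840756168393796053724308020610413193359375000;
     32539535183585270115317318680758387213134765625;
     43873238432876061043018735742100879913330078125;
     44501134955209697802433371510899630432128906250;
     31939962003848116218520272368762379455566406250;
     14461231399615313228029463015093845367431640625;
     3105751239439442768605100808357257843017578125];
    [9570421548871789849708129151725; 821578191391650093031784754921825;
     33513704565740547041663123501507850; 863674108894985771571298790890410250;
     15769219892335306495778505958157038125; 216821922048159334685283615202832615625;
     2329409510858034169402021904880913375000; 20023653430083508588424146331594484375000;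
     139881230380358344316161918718724597656250; 802091342478820689330789878248191470781250;
     3796888389830782555613088893192939610937500; 14870926507915694390786981246185175085937500;
     48142375692809120823870601712068524238281250;
     128281429836224471781982761817167514160156250;
     279159543264826335067528585408983427734375000;
     490113788182620305744227837795141943359375000;
     681823698593197092382244323215293463134765625;
     731953727969685473393635011341888214111328125;
     582587188556449168502694094135523986816406250;
     322295288713483092317264955937330627441406250;
     110060153277622870008266507817111968994140625;
     17374580325114075969769810622577667236328125];
    [937418835773035393398944893750; 74738489668987775267102004168750;
     2817343295248435583736077457487500; 66747227294129878983317110916887500;
     1114313649176134249005647148592893750; 13930071694853704258977408265523718750;
     135258523956068424044617577761635250000; 1044256528827522423261302233112633250000;
     6508608737244173132793528734831577187500; 33064506569506152166680994931931285937500;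
     137634215521112957441105637798830953125000; 470258331703777613428826180641211953125000;
     1316861172962299223184878219894313085937500; 3007961438638542180225390348665932617187500;
     5557938535424822254594455948839238281250000; 8203001940563038501741838034273144531250000;
     9495055713752652222180183951010437011718750; 8394444116817674969084642986941833496093750;
     5448656700618407135564818076242065429687500; 2436940588005294696780062232833862304687500;
     668356732825338226439300540885925292968750; 84418879777439877826210329246520996093750];
    [60122354594164189458153593750; 4317133333844581080906847968750;
     146018460903583483664156914687500; 3091519516535864581285515204687500;
     45925022214077684254473161758593750; 508513614723777888728668910981718750;
     4352028517183770136858664757411250000; 29460909418030892342554953571541250000;
     160116976725925926482620586441592187500; 705165783134253075037105474223535937500;
     2529252767099900137410393941098453125000; 7399642519253777234466176364278203125000;
     17630097453700988382355101041491210937500; 34047640989718979614789915415932617187500;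
     52870004227002242262559430102988281250000; 65218867424227886771342070727832031250000;
     62808078079525763579257195349304199218750; 46045037406274854502418418260192871093750;
     24739214059181998620630778488159179687500; 9158803447282385893433602706909179687500;
     2082843944530067769161691398620605468750; 218875518623326152428236961364746093750];
    [2064046134911103324823828125; 131810997826163574660537890625;
     3949286187379224793503203906250; 73760246432730434902023466406250;
     962342984426471319991270611328125; 9315722267493568268858423816015625;
     69369374840686406486939101809375000; 406591892383862548506233176434375000;
     1903868516917532695853760543185156250; 7188643626359040411298108228675781250;
     22001321280589894620858086724960937500; 54683990141862165373240148841210937500;
     110261097615781046011576443395800781250; 179649160358005047121928646514160156250;
     234849931542523353340504385302734375000; 243650187548591605155194563037109375000;
     197394187749436568928170933990478515625; 121923740352203021316951852081298828125;
     55341322445067428245001725158691406250; 17372834577677459548202540588378906250;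
     3365226263374011494011997222900390625; 302752971458056127730731964111328125];
    [29588504007316082236328125; 1654029711934424164306640625; 43213452173796860068066406250;
     700969624010715824536816406250; 7910791623158079093535986328125;
     65971415249088527552816572265625; 421533120393920416072605859375000;
     2112093727240001568631102734375000; 8425580460096552150530501660156250;
     27024516387696508329463447363281250; 70104006736741358808961421835937500;
     147481342541960185705315716210937500; 251594936392459110325563195800781250;
     347039755053702634870152209472656250; 384719076575226960716252958984375000;
     339364988513000614129589599609375000; 234583063998857484231845123291015625;
     124143298779787781324494171142578125; 48505023268009698256398010253906250;
     13172995944785333474903869628906250; 2219010564578644360874176025390625;
     174520163951694569416046142578125]
  ]%Z.

Definition cert_re_b_a : list (list Z) :=
  [
    [229158588034931209435263; 29700482868189456940989225; 1427100944519003163661869975;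
     38339865773854734683875388625; 673254829084369969285355248875;
     8356402911366352599833674828125; 76597943074927506666904493821875;
     531664265119215718070347768903125; 2830093174005476409763315516828125;
     11589419535852843752226177288046875; 36294181582398475580988931339453125;
     85503720658756412578407416982421875; 146871984620306265053556413759765625;
     173833783604367255737365395849609375; 126866113706167222975094867431640625;
     43066630884065689125434154052734375];
    [297718140095932959964575; 19194084672879291255812025; 575003905642629080376571575;
     10607671051055239216086446625; 134620686426250303841187556875;
     1243332091302164339916517678125; 8619929513000183954913187921875;
     45596004978845054045327213953125; 185110433194481600307277146328125;
     575160908095735834884073536796875; 1351731265468634201551639976953125;
     2348941703549999298162820576171875; 2904235684029455896047039697265625;
     2393628366405139300546116943359375; 1165113832621125199386640869140625;
     250365398828589734179603271484375];
    [31010273617670235131250; 1792268059212613305618750; 47667873730657774823381250;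
     772591481324724935737368750; 8516864365063985101943756250; 67482573247928130358525593750;
     395913174139002407747480906250; 1745616490445001087940770843750;
     5809398479896952097606733593750; 14528821686675285977808072656250;
     26949955601551642468954277343750; 36227270888061706013029628906250;
     34004432870506000991147636718750; 20974163572905606466710644531250;
     7593004462343560211878417968750; 1217139556601314824484863281250];
    [2049446245379797031250; 101848469244700234218750; 2308506175376479683281250;
     31574700398418727117968750; 290576687678844405447656250; 1899568800326581374148593750;
     9079745246970223006876406250; 32191207608965391812709843750;
     85033313374884767169096093750; 166810598962235945746197656250;
     240502507275512914403589843750; 250085699815687385485253906250;
     181698207226373978697949218750; 87251309863243256113769531250;
     24830240130938378667480468750; 3166838898654504250488281250];
    [71797353536368359375; 2988753472245097265625; 56175772596024202734375;
     630358092459262887890625; 4706890377864959935546875; 24695142647984397692578125;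
     93794373301594273538671875; 262138159501601928964453125; 543292499617809847442578125;
     835840654530337993154296875; 948853190910725475908203125; 782852045530040820263671875;
     455909405009135184228515625; 177520687725492577880859375; 41458144123342144775390625;
     4390714129032220458984375];
    [1044356075068359375; 35067790907666015625; 526406410629052734375; 4673477476123681640625;
     27395699706927685546875; 112277717127427236328125; 332776863782117138671875;
     728310509993609033203125; 1190975123300333642578125; 1460819447581162060546875;
     1338092897500467158203125; 902043453079571044921875; 434574384201177978515625;
     141644989222503662109375; 27997483556832275390625; 2535240543255615234375]
  ]%Z.

Ltac expand_siems7 :=
  unfold sqmod, re_mul_conj, cos_part, sin_part, bernstein2,
    cert_sqmod_a_1, cert_sqmod_a_2, cert_sqmod_a_3, cert_sqmod_a_4, cert_ratio_c_a, cert_re_b_a;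
  cbn [sum_f_R0 cheb_T cheb_V siems7_a_num siems7_b siems7_c bernstein map Nat.pred].

Ltac bernstein_certificate s l C dx dy p q r w :=
  apply (nonneg_of_scaled_product s l (bernstein2 C dx dy p q r w));
  [lra | lra | apply bernstein2_nonneg; [vm_compute; reflexivity | lra ..] | expand_siems7; ring].

Lemma sqmod_siems7_a_num_ge (g x : R) : 11/5 <= g <= 9 -> -1 <= x <= 1 ->
  420 ^ 2 <= sqmod (siems7_a_num g) 6 x.
Proof.
  intros Hg Hx. apply Rge_le, Rminus_ge, Rle_ge.
  destruct (Rle_lt_dec x 0); [|destruct (Rle_lt_dec x (1/2)); [|destruct (Rle_lt_dec x (3/4))]].
  - bernstein_certificate 2913111186148805000000000 (1 - x) cert_sqmod_a_1 5%nat 12%nat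
      (x + 1) (- x) (5 * g - 11) (45 - 5 * g).
  - bernstein_certificate 11652444744595220000000000 (1 - x) cert_sqmod_a_2 5%nat 12%nat
      (2 * x) (1 - 2 * x) (5 * g - 11) (45 - 5 * g).
  - bernstein_certificate 93219557956761760000000000 (1 - x) cert_sqmod_a_3 5%nat 12%nat
      (4 * x - 2) (3 - 4 * x) (5 * g - 11) (45 - 5 * g).
  - bernstein_certificate 93219557956761760000000000 (1 - x) cert_sqmod_a_4 5%nat 12%nat
      (4 * x - 3) (4 - 4 * x) (5 * g - 11) (45 - 5 * g).
Qed.

Lemma sqmod_siems7_c_a_cross (g x : R) : 11/5 <= g <= 9 -> -1 <= x <= 1 ->
  sqmod (siems7_c g) 6 x * sqmod (siems7_a_num g) 6 (-1)
  <= sqmod (siems7_c g) 6 (-1) * sqmod (siems7_a_num g) 6 x.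
Proof.
  intros Hg Hx. apply Rge_le, Rminus_ge, Rle_ge.
  bernstein_certificate 11054709426081397260932354720000000000000000000 (1 + x) cert_ratio_c_a
    5%nat 21%nat (x + 1) (1 - x) (5 * g - 11) (45 - 5 * g).
Qed.

Definition siems7_lambda_den (g : R) : R :=
  420 * g ^ 6 - 1050 * g ^ 4 + 1400 * g ^ 3 - 840 * g ^ 2 + 252 * g - 31.

Lemma re_mul_conj_siems7_b_a_ge (g x : R) : 11/5 <= g <= 9 -> -1 <= x <= 1 ->
  105 * (1 - 2 * g) ^ 6 * sqmod (siems7_a_num g) 6 x
  <= 16 * 420 * siems7_lambda_den g * re_mul_conj (siems7_b g) 7 (siems7_a_num g) 6 x.
Proof.
  intros Hg Hx. apply Rge_le, Rminus_ge, Rle_ge. unfold siems7_lambda_den.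
  bernstein_certificate 91597537648314105376000000000000 (1 + x) cert_re_b_a
    5%nat 15%nat (x + 1) (1 - x) (5 * g - 11) (45 - 5 * g).
Qed.

Definition siems7_ratio_den (g : R) : R :=
  64 * g ^ 6 + 192 * g ^ 5 - 240 * g ^ 4 + 160 * g ^ 3 - 60 * g ^ 2 + 12 * g - 1.

Lemma siems7_lambda_den_ge1 (g : R) : 2 <= g -> 1 <= siems7_lambda_den g.
Proof.
  intros Hg.
  assert (H : forall u, 0 <= u ->
            0 <= u * (60732 + u * (83160 + u * (60200 + u * (24150 + u * (5040 + u * 420))))))
    by (intros u Hu; repeat (apply Rmult_le_pos || apply Rplus_le_le_0_compat); lra).
  specialize (H (g - 2) ltac:(lra)).
  replace (siems7_lambda_den g) with
    (18393 + (g - 2) * (60732 + (g - 2) * (83160 + (g - 2) * (60200 + (g - 2) * (24150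
       + (g - 2) * (5040 + (g - 2) * 420))))))
    by (unfold siems7_lambda_den; ring).
  lra.
Qed.

Lemma siems7_ratio_den_ge1 (g : R) : 2 <= g -> 1 <= siems7_ratio_den g.
Proof.
  intros Hg.
  assert (H : forall u, 0 <= u ->
            0 <= u * (21660 + u * (25860 + u * (16160 + u * (5520 + u * (960 + u * 64))))))
    by (intros u Hu; repeat (apply Rmult_le_pos || apply Rplus_le_le_0_compat); lra).
  specialize (H (g - 2) ltac:(lra)).
  replace (siems7_ratio_den g) with
    (7463 + (g - 2) * (21660 + (g - 2) * (25860 + (g - 2) * (16160 + (g - 2) * (5520
       + (g - 2) * (960 + (g - 2) * 64))))))
    by (unfold siems7_ratio_den; ring).
  lra.
Qed.

Lemma siems7_cos_parts (g : R) :
  cos_part (siems7_a_num g) 6 1 = 420 /\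
  cos_part (siems7_a_num g) 6 (-1) = 64 * siems7_lambda_den g /\
  cos_part (siems7_b g) 7 (-1) = (1 - 2 * g) ^ 6 /\
  cos_part (siems7_c g) 6 (-1) = siems7_ratio_den g.
Proof.
  unfold siems7_lambda_den, siems7_ratio_den.
  repeat split; expand_siems7; ring.
Qed.

Lemma sqmod_nonneg (p : nat -> R) (n : nat) (x : R) : -1 <= x <= 1 -> 0 <= sqmod p n x.
Proof.
  intros Hx. unfold sqmod.
  assert (0 <= 1 - x ^ 2) by nra.
  apply Rplus_le_le_0_compat; [|apply Rmult_le_pos; [assumption|]]; apply pow2_ge_0.
Qed.

Lemma Rdiv_le_of_cross (a b c d : R) : 0 < b -> 0 < d -> a * d <= c * b -> a / b <= c / d.
Proof.
  intros Hb Hd H. apply (Rmult_le_reg_r (b * d)); [now apply Rmult_lt_0_compat|].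
  replace (a / b * (b * d)) with (a * d) by (field; lra).
  replace (c / d * (b * d)) with (c * b) by (field; lra). exact H.
Qed.

Lemma sqrt_ratio_le (u v u' v' : R) : 0 <= u -> 0 < v -> 0 <= u' -> 0 < v' ->
  u * v' <= u' * v -> sqrt u / sqrt v <= sqrt u' / sqrt v'.
Proof.
  intros Hu Hv Hu' Hv' H.
  rewrite <- !sqrt_div_alt by assumption. apply sqrt_le_1_alt.
  now apply Rdiv_le_of_cross.
Qed.

Definition siems7_lambda (g : R) : R := 105 * (1 - 2 * g) ^ 6 / (16 * siems7_lambda_den g).

Section Siems7.

Variable g : R.
Hypothesis Hg : 11/5 <= g <= 9.

Lemma sqmod_siems7_a (x : R) : sqmod (siems7_a g) 6 x = sqmod (siems7_a_num g) 6 x / 420 ^ 2.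
Proof. apply (sqmod_div (siems7_a_num g)). lra. Qed.

Lemma siems7_sqmod_a_ge1 (x : R) : -1 <= x <= 1 -> 1 <= sqmod (siems7_a g) 6 x.
Proof.
  intros Hx. rewrite sqmod_siems7_a. pose proof (sqmod_siems7_a_num_ge g x Hg Hx).
  apply (Rmult_le_reg_r (420 ^ 2)); [lra|]. unfold Rdiv. rewrite Rmult_assoc, Rinv_l; lra.
Qed.

Lemma siems7_mod_a_ge1 (t : R) : 1 <= Cmod (trig_sum (siems7_a g) 6 t).
Proof.
  rewrite Cmod_trig_sum, <- sqrt_1. apply sqrt_le_1_alt, siems7_sqmod_a_ge1, COS_bound.
Qed.

Lemma siems7_mod_a_0 : Cmod (trig_sum (siems7_a g) 6 0) = 1.
Proof.
  rewrite Cmod_trig_sum, cos_0, sqmod_siems7_a, sqmod_at_pm1 by ring.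
  destruct (siems7_cos_parts g) as [-> _]. replace (420 ^ 2 / 420 ^ 2) with 1 by field.
  apply sqrt_1.
Qed.

Lemma siems7_mod_a_pi : Cmod (trig_sum (siems7_a g) 6 PI) = 64 * siems7_lambda_den g / 420.
Proof.
  rewrite Cmod_trig_sum, cos_PI, sqmod_siems7_a, sqmod_at_pm1 by ring.
  destruct (siems7_cos_parts g) as [_ [-> _]].
  pose proof (siems7_lambda_den_ge1 g ltac:(lra)).
  rewrite <- sqrt_pow2 by lra. f_equal. field.
Qed.

Lemma siems7_mod_c_pi : Cmod (trig_sum (siems7_c g) 6 PI) = siems7_ratio_den g.
Proof.
  rewrite Cmod_trig_sum, cos_PI, sqmod_at_pm1 by ring.
  destruct (siems7_cos_parts g) as [_ [_ [_ ->]]].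
  apply sqrt_pow2. pose proof (siems7_ratio_den_ge1 g ltac:(lra)). lra.
Qed.

Lemma siems7_ratio_c_a_le (t : R) :
  Cmod (trig_sum (siems7_c g) 6 t) / Cmod (trig_sum (siems7_a g) 6 t)
  <= Cmod (trig_sum (siems7_c g) 6 PI) / Cmod (trig_sum (siems7_a g) 6 PI).
Proof.
  rewrite !Cmod_trig_sum, cos_PI. pose proof (COS_bound t) as Hx.
  assert (Hpm1 : -1 <= -1 <= 1) by lra.
  pose proof (siems7_sqmod_a_ge1 _ Hx). pose proof (siems7_sqmod_a_ge1 _ Hpm1).
  apply sqrt_ratio_le; try apply sqmod_nonneg; try assumption; try lra.
  rewrite !sqmod_siems7_a. pose proof (sqmod_siems7_c_a_cross g (cos t) Hg Hx).
  unfold Rdiv. rewrite <- !Rmult_assoc. apply Rmult_le_compat_r; [|assumption].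
  apply Rlt_le, Rinv_0_lt_compat. lra.
Qed.

Lemma siems7_re_b_a_ge (t : R) :
  siems7_lambda g <= Re (trig_sum (siems7_b g) 7 t / trig_sum (siems7_a g) 6 t).
Proof.
  pose proof (COS_bound t) as Hx. rewrite Re_div_trig_sum.
  pose proof (siems7_sqmod_a_ge1 _ Hx) as HS.
  pose proof (siems7_lambda_den_ge1 g ltac:(lra)).
  pose proof (re_mul_conj_siems7_b_a_ge g (cos t) Hg Hx).
  rewrite sqmod_siems7_a in *. unfold siems7_a.
  rewrite (re_mul_conj_div_r (siems7_b g) (siems7_a_num g)) by lra.
  unfold siems7_lambda. apply Rdiv_le_of_cross; lra.
Qed.

Lemma siems7_re_b_a_pi :
  Re (trig_sum (siems7_b g) 7 PI / trig_sum (siems7_a g) 6 PI) = siems7_lambda g.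
Proof.
  pose proof (siems7_lambda_den_ge1 g ltac:(lra)).
  rewrite Re_div_trig_sum, cos_PI, sqmod_siems7_a. unfold siems7_a.
  rewrite re_mul_conj_div_r, re_mul_conj_at_pm1, sqmod_at_pm1 by (lra || ring).
  destruct (siems7_cos_parts g) as [_ [-> [-> _]]].
  unfold siems7_lambda. field. lra.
Qed.

End Siems7.

Lemma is_max_of_range (F : R -> R) (v t0 : R) :
  0 <= t0 < 2 * PI -> v = F t0 -> (forall t, F t <= v) -> is_max_of (range_0_2pi F) v.
Proof. intros Ht0 Hv HF. split; [now exists t0 | intros w [t [_ ->]]; apply HF]. Qed.

Lemma is_min_of_range (F : R -> R) (v t0 : R) :
  0 <= t0 < 2 * PI -> v = F t0 -> (forall t, v <= F t) -> is_min_of (range_0_2pi F) v.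
Proof. intros Ht0 Hv HF. split; [now exists t0 | intros w [t [_ ->]]; apply HF]. Qed.

Theorem mainTheorem14 (g : R) (a b c : nat -> R) :
  11 / 5 <= g <= 9 ->
  SIEMS_a_coeffs 7 g a -> SIEMS_b_coeffs 7 g b -> SIEMS_c_coeffs 7 g c ->
  let aT := trig_sum a 6 in
  let bT := trig_sum b 7 in
  let cT := trig_sum c 6 in
  let sigmaE := Cmod (cT PI) / Cmod (aT PI) in
  let lambdaI :=
    105 * (1 - 2 * g) ^ 6 /
    (16 * (420 * g ^ 6 - 1050 * g ^ 4 + 1400 * g ^ 3 - 840 * g ^ 2 + 252 * g - 31)) in
  (forall t, aT t <> RtoC 0) /\
  is_max_of (range_0_2pi (fun t => Cmod (Cinv (aT t)))) 1 /\
  is_max_of (range_0_2pi (fun t => Cmod (Cdiv (cT t) (aT t)))) sigmaE /\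
  is_min_of (range_0_2pi (fun t => Re (Cdiv (bT t) (aT t)))) lambdaI /\
  lambdaI / sigmaE =
    (1 - 2 * g) ^ 6 /
    (64 * g ^ 6 + 192 * g ^ 5 - 240 * g ^ 4 + 160 * g ^ 3 - 60 * g ^ 2 + 12 * g - 1).
Proof.
  intros Hg Ha Hb Hc aT bT cT sigmaE lambdaI.
  assert (EA : forall t, aT t = trig_sum (siems7_a g) 6 t)
    by (intro; apply trig_sum_ext, siems7_a_coeffs, Ha).
  assert (EB : forall t, bT t = trig_sum (siems7_b g) 7 t)
    by (intro; apply trig_sum_ext, siems7_b_coeffs, Hb).
  assert (EC : forall t, cT t = trig_sum (siems7_c g) 6 t)
    by (intro; apply trig_sum_ext, siems7_c_coeffs, Hc).
  assert (Ha1 : forall t, 1 <= Cmod (aT t)) by (intro; rewrite EA; now apply siems7_mod_a_ge1).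
  assert (Hnz : forall t, aT t <> RtoC 0)
    by (intros t E; specialize (Ha1 t); rewrite E, Cmod_0 in Ha1; lra).
  assert (H0 : 0 <= 0 < 2 * PI) by (pose proof PI_RGT_0; lra).
  assert (Hpi : 0 <= PI < 2 * PI) by (pose proof PI_RGT_0; lra).
  pose proof (siems7_lambda_den_ge1 g ltac:(lra)).
  pose proof (siems7_ratio_den_ge1 g ltac:(lra)).
  split; [exact Hnz|]. split; [|split; [|split]].
  - apply (is_max_of_range _ _ 0 H0); intros; rewrite Cmod_inv by apply Hnz.
    + rewrite EA, siems7_mod_a_0. now rewrite Rinv_1.
    + specialize (Ha1 t). rewrite <- Rinv_1. apply Rinv_le_contravar; lra.
  - apply (is_max_of_range _ _ PI Hpi); intros; rewrite !Cmod_div by apply Hnz; [reflexivity|].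
    unfold sigmaE. rewrite !EA, !EC. now apply siems7_ratio_c_a_le.
  - change lambdaI with (siems7_lambda g).
    apply (is_min_of_range _ _ PI Hpi); intros; rewrite EA, EB.
    + symmetry. now apply siems7_re_b_a_pi.
    + now apply siems7_re_b_a_ge.
  - change lambdaI with (siems7_lambda g). unfold sigmaE, siems7_lambda.
    rewrite EA, EC, siems7_mod_a_pi, siems7_mod_c_pi by lra.
    unfold siems7_ratio_den, siems7_lambda_den in *. field. lra.
Qed.
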